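(* Let $f$ be a $C^\infty$ function on $\mathbb R$ with no flat zero (for every $x$ with $f(x)=0$ there exists $r\in\mathbb N$ with $f^{(r)}(x)\neq0$), and let $a<b$ with $f(a)f(b)\neq0$. Then the number of zeros of $f$ in $[a,b]$ (counted without multiplicity) is finite and $$\mathcal H^0(\{f=0\}\cap[a,b])=\frac1\pi\Big[\arctan\frac{f'(b)}{f(b)}-\arctan\frac{f'(a)}{f(a)}+\int_a^b\frac{f'(x)^2-f(x)f''(x)}{f(x)^2+f'(x)^2}\,dx\Big].$$
   Context: $\mathcal H^0(\{f=0\}\cap[a,b])$ denotes the number of distinct zeros of $f$ in $[a,b]$. *)

From Stdlib Require Import Reals List.
From Coquelicot Require Import Coquelicot.
Open Scope R_scope.

Definition smooth (f : R -> R) : Prop :=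
  forall (n : nat) (x : R), ex_derive (Derive_n f n) x.

Definition no_flat_zero (f : R -> R) : Prop :=
  forall x : R, f x = 0 -> exists r : nat, Derive_n f r x <> 0.

Definition zero_count_integrand (f : R -> R) (x : R) : R :=
  (Derive_n f 1 x ^ 2 - f x * Derive_n f 2 x) / (f x ^ 2 + Derive_n f 1 x ^ 2).

(* On an interval where f does not vanish, - atan (f'/f) is a primitive of the
   integrand, so the integral there is the drop of the angle atan (f'/f).  At a
   zero s of order n >= 1, Taylor's formula gives (x - s) f'(x) / f(x) -> n, so the
   angle jumps from -pi/2 to pi/2 across s, while in the integrand the common
   factor (x - s)^(2n-2) cancels and it extends continuously to s: each zero adds
   exactly pi to the integral.  Zeros are therefore isolated, and a supremum
   argument glues these local identities over [a, b]. *)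

From Stdlib Require Import Reals List Lra Lia Classical Factorial.
From Coquelicot Require Import Coquelicot.
Open Scope R_scope.

Lemma smooth_is_derive f n x :
  smooth f -> is_derive (Derive_n f n) x (Derive_n f (S n) x).
Proof. intros Hs; apply Derive_correct, Hs. Qed.

Lemma smooth_continuous f n x : smooth f -> continuous (Derive_n f n) x.
Proof. intros Hs; apply (ex_derive_continuous (Derive_n f n)), Hs. Qed.

Lemma smooth_ex_derive_n f n x : smooth f -> ex_derive_n f n x.
Proof. intros Hs; destruct n; [exact I|apply Hs]. Qed.

Lemma smooth_Derive_n f k : smooth f -> smooth (Derive_n f k).
Proof.
  intros Hs n x; apply ex_derive_ext with (Derive_n f (n + k)); [|apply Hs].
  intros t; symmetry; apply Derive_n_comp.
Qed.

Lemma Derive_n_opp_var f n x : smooth f ->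
  Derive_n (fun y => f (- y)) n x = (-1) ^ n * Derive_n f n (- x).
Proof.
  intros Hs; apply Derive_n_comp_opp.
  apply filter_forall; intros y k _; now apply smooth_ex_derive_n.
Qed.

Lemma smooth_opp_var f : smooth f -> smooth (fun y => f (- y)).
Proof.
  intros Hs n x.
  apply ex_derive_ext with (fun y => (-1) ^ n * Derive_n f n (- y)).
  - intros t; symmetry; now apply Derive_n_opp_var.
  - apply ex_derive_scal, (ex_derive_comp (Derive_n f n) Ropp); [apply Hs|].
    apply (ex_derive_opp (fun y : R => y)), ex_derive_id.
Qed.

Lemma taylor_flat_right g m s x : smooth g ->
  (forall k, (k < m)%nat -> Derive_n g k s = 0) -> s < x ->
  exists z, s <= z <= x /\ g x = (x - s) ^ m / INR (fact m) * Derive_n g m z.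
Proof.
  intros Hs Hflat Hsx; destruct m as [|m].
  - now exists x; split; [lra|simpl; field].
  - destruct (Taylor_Lagrange g m s x Hsx) as [z [Hz ->]].
    + intros t _ k _; now apply smooth_ex_derive_n.
    + exists z; split; [lra|].
      rewrite (sum_eq _ (fun _ => 0)), sum_cte; [ring|].
      intros i Hi; rewrite Hflat; [ring|lia].
Qed.

Lemma taylor_flat g m s x : smooth g ->
  (forall k, (k < m)%nat -> Derive_n g k s = 0) ->
  exists z, Rabs (z - s) <= Rabs (x - s) /\
    g x = (x - s) ^ m / INR (fact m) * Derive_n g m z.
Proof.
  intros Hs Hflat.
  destruct (Rtotal_order s x) as [Hsx|[<-|Hxs]].
  - destruct (taylor_flat_right g m s x Hs Hflat Hsx) as [z [Hz E]].
    exists z; split; [rewrite !Rabs_right; lra|exact E].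
  - exists s; split; [lra|]; destruct m as [|m]; [simpl; field|].
    change (g s) with (Derive_n g 0 s); rewrite Hflat by lia.
    rewrite Rminus_diag, pow_i by lia; unfold Rdiv; ring.
  - destruct (taylor_flat_right (fun y => g (- y)) m (- s) (- x))
      as [z [Hz E]]; [now apply smooth_opp_var| |lra|].
    + intros k Hk; rewrite Derive_n_opp_var, Ropp_involutive, Hflat; auto; ring.
    + exists (- z); split; [rewrite !Rabs_left1; lra|].
      rewrite Ropp_involutive in E; rewrite E, Derive_n_opp_var by exact Hs.
      replace (x - s) with ((- x - - s) * (-1)) by ring.
      rewrite Rpow_mult_distr; field; apply INR_fact_neq_0.
Qed.

Lemma is_lim_flat_quotient g m s : smooth g ->
  (forall k, (k < m)%nat -> Derive_n g k s = 0) ->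
  is_lim (fun x => g x / (x - s) ^ m) s (Derive_n g m s / INR (fact m)).
Proof.
  intros Hs Hflat; apply is_lim_spec; intros eps.
  assert (Hfact := INR_fact_lt_0 m).
  assert (Heps : 0 < eps * INR (fact m)) by (apply Rmult_lt_0_compat; [apply cond_pos|lra]).
  destruct (smooth_continuous g m s Hs _ (locally_ball _ (mkposreal _ Heps))) as [d Hd].
  exists d; intros x Hx Hxs; simpl in *.
  destruct (taylor_flat g m s x Hs Hflat) as [z [Hz ->]].
  assert (Hpow : (x - s) ^ m <> 0) by (apply pow_nonzero; lra).
  replace ((x - s) ^ m / INR (fact m) * Derive_n g m z / (x - s) ^ m
           - Derive_n g m s / INR (fact m))
    with ((Derive_n g m z - Derive_n g m s) / INR (fact m)) by (field; lra).
  rewrite Rabs_div, (Rabs_right (INR _)) by lra.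
  apply Rlt_div_l; [lra|]; apply (Hd z).
  change (Rabs (x - s) < d) in Hx; change (Rabs (z - s) < d); lra.
Qed.

(** * The angle [atan (f'/f)], a primitive of minus the integrand *)

Lemma continuous_integrand f x : smooth f ->
  f x ^ 2 + Derive_n f 1 x ^ 2 <> 0 -> continuous (zero_count_integrand f) x.
Proof.
  intros Hs Hden.
  assert (C : forall n, continuous (Derive_n f n) x) by (intros; now apply smooth_continuous).
  assert (Csq : forall n, continuous (fun y => Derive_n f n y ^ 2) x).
  { intros n; apply continuous_ext with (fun y => mult (Derive_n f n y) (Derive_n f n y)).
    - intros y; unfold mult; simpl; ring.
    - now apply (@continuous_mult _ R_AbsRing). }
  unfold zero_count_integrand.
  apply (@continuous_mult _ R_AbsRing (fun y => Derive_n f 1 y ^ 2 - f y * Derive_n f 2 y)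
           (fun y => / (f y ^ 2 + Derive_n f 1 y ^ 2))).
  - apply (@continuous_minus _ _ R_NormedModule (fun y => Derive_n f 1 y ^ 2)
             (fun y => f y * Derive_n f 2 y)); [apply Csq|].
    apply (@continuous_mult _ R_AbsRing f (Derive_n f 2)); [apply (C 0%nat)|apply C].
  - apply continuous_Rinv_comp; [|exact Hden].
    apply (@continuous_plus _ _ R_NormedModule (fun y => f y ^ 2) (fun y => Derive_n f 1 y ^ 2));
      [apply (Csq 0%nat)|apply Csq].
Qed.

Definition angle (f : R -> R) (x : R) : R := atan (Derive_n f 1 x / f x).

Lemma is_derive_angle f x : smooth f -> f x <> 0 ->
  is_derive (fun y => - angle f y) x (zero_count_integrand f x).
Proof.
  intros Hs Hfx.
  assert (Hq : is_derive (fun y => Derive_n f 1 y / f y) x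
    ((Derive_n f 2 x * f x - Derive_n f 1 x * Derive_n f 1 x) / f x ^ 2)).
  { apply is_derive_div; [apply smooth_is_derive|apply (smooth_is_derive f 0)|]; easy. }
  pose proof (is_derive_opp _ _ _ (is_derive_comp atan _ x _ _ (is_derive_atan _) Hq)) as H.
  unfold angle; replace (zero_count_integrand f x) with
    (opp (scal ((Derive_n f 2 x * f x - Derive_n f 1 x * Derive_n f 1 x) / f x ^ 2)
               (/ (1 + (Derive_n f 1 x / f x)²)))); [exact H|].
  unfold zero_count_integrand, opp, scal; simpl; unfold mult, Rsqr; simpl.
  assert (0 < f x * f x) by (apply Rsqr_pos_lt; exact Hfx).
  assert (0 <= Derive_n f 1 x * Derive_n f 1 x) by apply Rle_0_sqr.
  field; split; [|exact Hfx]; nra.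
Qed.

Lemma nonzero_integrand_denominator f x : f x <> 0 -> f x ^ 2 + Derive_n f 1 x ^ 2 <> 0.
Proof.
  intros Hfx; assert (0 < f x ^ 2) by (apply pow2_gt_0, Hfx).
  assert (0 <= Derive_n f 1 x ^ 2) by apply pow2_ge_0; lra.
Qed.

Lemma is_RInt_integrand_zero_free f u v : smooth f -> u <= v ->
  (forall x, u <= x <= v -> f x <> 0) ->
  is_RInt (zero_count_integrand f) u v (angle f u - angle f v).
Proof.
  intros Hs Huv Hnz.
  replace (angle f u - angle f v) with (minus (- angle f v) (- angle f u))
    by (unfold minus, plus, opp; simpl; ring).
  apply (is_RInt_derive (fun y => - angle f y)); rewrite Rmin_left, Rmax_right by lra;
    intros x Hx.
  - now apply is_derive_angle, Hnz.
  - now apply continuous_integrand, nonzero_integrand_denominator, Hnz.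
Qed.

Definition lists_zeros (f : R -> R) (u v : R) (zs : list R) : Prop :=
  NoDup zs /\ forall x, In x zs <-> u <= x <= v /\ f x = 0.

Definition zero_count_formula (f : R -> R) (u v : R) : Prop :=
  exists zs, lists_zeros f u v zs /\
    is_RInt (zero_count_integrand f) u v (PI * INR (length zs) + angle f u - angle f v).

Lemma zero_count_formula_zero_free f u v : smooth f -> u <= v ->
  (forall x, u <= x <= v -> f x <> 0) -> zero_count_formula f u v.
Proof.
  intros Hs Huv Hnz; exists nil; split; [split; [constructor|]|].
  - intros x; split; [easy|]; intros [Hx Hfx]; now apply (Hnz x).
  - simpl; rewrite Rmult_0_r, Rplus_0_l; now apply is_RInt_integrand_zero_free.
Qed.

Lemma zero_count_formula_chasles f u w v : u <= w <= v -> f w <> 0 ->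
  zero_count_formula f u w -> zero_count_formula f w v -> zero_count_formula f u v.
Proof.
  intros Hw Hfw [zs1 [[N1 Z1] I1]] [zs2 [[N2 Z2] I2]].
  exists (zs1 ++ zs2); split; [split|].
  - apply NoDup_app; [exact N1|exact N2|]; intros x H1 H2.
    apply Z1 in H1; apply Z2 in H2; replace x with w in * by lra; tauto.
  - intros x; rewrite in_app_iff, Z1, Z2; split.
    + intros [[? ?]|[? ?]]; split; auto; lra.
    + intros [Hx Hfx]; destruct (Rle_or_lt x w); [left|right]; split; auto; lra.
  - rewrite length_app, plus_INR.
    replace (PI * (INR (length zs1) + INR (length zs2)) + angle f u - angle f v)
      with (plus (PI * INR (length zs1) + angle f u - angle f w)
                 (PI * INR (length zs2) + angle f w - angle f v))
      by (unfold plus; simpl; ring).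
    now apply (@is_RInt_Chasles R_NormedModule) with w.
Qed.

(** * From local to global *)

Definition holds_near (Q : R -> R -> Prop) (cut : R -> Prop) (s : R) : Prop :=
  exists d, 0 < d /\
    (forall x, 0 < Rabs (x - s) < d -> cut x) /\
    (forall u v, s - d < u -> u <= v -> v < s + d -> cut u -> cut v -> Q u v).

Section LocalToGlobal.

Variables (Q : R -> R -> Prop) (cut : R -> Prop).

Hypothesis Q_chasles : forall u w v, u <= w <= v -> cut w -> Q u w -> Q w v -> Q u v.

Hypothesis Q_local : forall s, holds_near Q cut s.

Lemma local_to_global a b : a <= b -> cut a -> cut b -> Q a b.
Proof.
  intros Hab Ha Hb.
  set (E := fun x => a <= x <= b /\ forall y, a <= y <= x -> cut y -> Q a y).
  assert (Ea : E a).
  { split; [lra|]; intros y Hy _; replace y with a by lra.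
    destruct (Q_local a) as [d [Hd [_ Hloc]]]; apply Hloc; auto; lra. }
  destruct (completeness E) as [m [Hub Hlub]];
    [exists b; intros x [Hx _]; lra|now exists a|].
  assert (Ham : a <= m) by now apply Hub.
  assert (Hmb : m <= b) by (apply Hlub; intros x [Hx _]; lra).
  destruct (Q_local m) as [d [Hd [Hcut Hloc]]].
  assert (Hx : exists x, E x /\ m - d < x).
  { apply NNPP; intros Hno; enough (m <= m - d) by lra.
    apply Hlub; intros x Ex; apply Rnot_lt_le; intros Hx; apply Hno; now exists x. }
  destruct Hx as [x [[Hx HQx] Hxd]].
  assert (Hxm : x <= m) by (apply Hub; split; assumption).
  assert (Hw : exists w, a <= w <= x /\ m - d < w /\ cut w).
  { destruct (classic (cut x)) as [Hcx|Hcx]; [exists x; split; [lra|auto]|].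
    assert (a < x) by (destruct (Req_dec a x) as [<-|]; [contradiction|lra]).
    set (w := (Rmax a (m - d) + x) / 2).
    assert (a <= Rmax a (m - d) /\ m - d <= Rmax a (m - d)) by (split; [apply Rmax_l|apply Rmax_r]).
    assert (Rmax a (m - d) < x) by (apply Rmax_lub_lt; lra).
    exists w; split; [unfold w; lra|split; [unfold w; lra|]].
    apply Hcut; rewrite Rabs_left; unfold w; lra. }
  destruct Hw as [w [Hwx [Hwd Hcw]]].
  set (y0 := Rmin (m + d / 2) b).
  assert (Ey0 : E y0).
  { assert (y0 <= m + d / 2 /\ y0 <= b) by (split; [apply Rmin_l|apply Rmin_r]).
    split; [split; [apply Rmin_glb|]; lra|].
    intros y Hy Hcy; destruct (Rle_or_lt y x) as [Hyx|Hyx]; [apply HQx; auto; lra|].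
    apply (Q_chasles a w y); [lra|exact Hcw|apply HQx; auto; lra|].
    apply Hloc; auto; lra. }
  destruct (Rle_or_lt b (m + d / 2)) as [Hbd|Hbd].
  - assert (y0 = b) by (unfold y0; apply Rmin_right; lra).
    apply Ey0; [lra|exact Hb].
  - enough (m + d / 2 <= m) by lra.
    replace (m + d / 2) with y0 by (unfold y0; apply Rmin_left; lra); now apply Hub.
Qed.

End LocalToGlobal.

(** * Integrating across a removable singularity *)

Lemma removable_singularity (g : R -> R) (s L u v : R) :
  (forall x, u <= x <= v -> x <> s -> continuous g x) -> is_lim g s L ->
  exists G : R -> R, (forall x, x <> s -> G x = g x) /\
    forall x, u <= x <= v -> continuous G x.
Proof.
  intros Hg HL; exists (fun y => if Req_EM_T y s then L else g y); split.
  - intros x Hxs; now destruct (Req_EM_T x s).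
  - intros x Hx; destruct (Req_EM_T x s) as [->|Hxs].
    + apply continuity_pt_filterlim, continuity_pt_locally'; intros eps.
      apply is_lim_spec in HL; destruct (HL eps) as [d Hd].
      exists d; intros y Hy Hys.
      destruct (Req_EM_T y s); [contradiction|]; destruct (Req_EM_T s s); [|easy].
      now apply Hd.
    + apply continuous_ext_loc with g; [|now apply Hg].
      assert (Hd : 0 < Rabs (x - s)) by (apply Rabs_pos_lt; lra).
      exists (mkposreal _ Hd); intros y Hy; change (Rabs (y - x) < Rabs (x - s)) in Hy.
      destruct (Req_EM_T y s) as [->|]; [|easy].
      rewrite Rabs_minus_sym in Hy; lra.
Qed.

Lemma ex_RInt_continuous_on (G : R -> R) u v :
  (forall z, u <= z <= v -> continuous G z) ->
  forall x y, u <= x <= y -> y <= v -> ex_RInt G x y.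
Proof.
  intros HG x y Hxy Hy; apply (ex_RInt_continuous (V := R_CompleteNormedModule)).
  intros z Hz; rewrite Rmin_left, Rmax_right in Hz by lra; apply HG; lra.
Qed.

Lemma continuous_RInt_interior (G : R -> R) u s v : u < s < v ->
  (forall z, u <= z <= v -> continuous G z) -> continuous (fun z => RInt G u z) s.
Proof.
  intros Hs HG; apply (continuous_RInt_1 G u s).
  assert (Hd : 0 < Rmin (s - u) (v - s)) by (apply Rmin_glb_lt; lra).
  exists (mkposreal _ Hd); intros z Hz; change (Rabs (z - s) < Rmin (s - u) (v - s)) in Hz.
  assert (Rmin (s - u) (v - s) <= s - u /\ Rmin (s - u) (v - s) <= v - s)
    by (split; [apply Rmin_l|apply Rmin_r]).
  apply Rabs_def2 in Hz; apply (RInt_correct (V := R_CompleteNormedModule)).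
  apply (ex_RInt_continuous_on G u v HG); lra.
Qed.

Lemma continuous_value_of_limit {Fx} {FF : ProperFilter Fx} (h k : R -> R) s l c :
  filter_le Fx (locally s) -> continuous h s ->
  Fx (fun x => h x = k x + c) -> filterlim k Fx (locally l) -> h s = l + c.
Proof.
  intros HF Hh Hhk Hk.
  apply (@filterlim_locally_unique R R_AbsRing R_NormedModule Fx _ h).
  - exact (filterlim_filter_le_1 h HF Hh).
  - apply filterlim_ext_loc with (fun x => plus (k x) c).
    + now apply filter_imp with (2 := Hhk).
    + apply (filterlim_comp_2 (G := locally l) (H := locally c) k (fun _ => c) plus);
        [exact Hk|apply filterlim_const|].
      apply (@filterlim_plus R_AbsRing R_NormedModule).
Qed.

Lemma is_RInt_jump (g F : R -> R) (u s v L l r : R) :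
  u < s < v ->
  (forall x, u <= x <= v -> x <> s -> continuous g x) -> is_lim g s L ->
  (forall x, u <= x < s -> is_RInt g u x (F x - F u)) ->
  (forall x, s < x <= v -> is_RInt g x v (F v - F x)) ->
  filterlim F (at_left s) (locally l) -> filterlim F (at_right s) (locally r) ->
  is_RInt g u v (F v - F u + (l - r)).
Proof.
  intros Hs Hg HL HFl HFr Hl Hr.
  destruct (removable_singularity g s L u v Hg HL) as [G [HGg HGc]].
  pose proof (ex_RInt_continuous_on G u v HGc) as HGi.
  assert (HGg_int : forall x y c, x <= y -> (y <= s \/ s <= x) ->
            is_RInt G x y c <-> is_RInt g x y c).
  { intros x y c Hxy Hxys.
    split; apply is_RInt_ext; rewrite Rmin_left, Rmax_right by lra; intros z Hz;
      rewrite HGg by lra; reflexivity. }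
  set (J := fun z => RInt G u z).
  assert (HJ : continuous J s) by now apply (continuous_RInt_interior G u s v).
  assert (Jl : J s = l + - F u).
  { apply (continuous_value_of_limit (Fx := at_left s) J F);
    [apply filter_le_within|exact HJ| |exact Hl].
    exists (mkposreal _ (proj2 (Rlt_0_minus _ _) (proj1 Hs))); intros x Hx Hxs.
    change (Rabs (x - s) < s - u) in Hx; apply Rabs_def2 in Hx.
    unfold J; rewrite (is_RInt_unique G u x (F x - F u)); [ring|].
    apply HGg_int; [lra|lra|]; apply HFl; lra. }
  assert (Jr : J s = r + (J v - F v)).
  { apply (continuous_value_of_limit (Fx := at_right s) J F);
    [apply filter_le_within|exact HJ| |exact Hr].
    exists (mkposreal _ (proj2 (Rlt_0_minus _ _) (proj2 Hs))); intros x Hx Hxs.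
    change (Rabs (x - s) < v - s) in Hx; apply Rabs_def2 in Hx.
    unfold J; rewrite <- (RInt_Chasles G u x v) by (apply HGi; lra).
    rewrite (is_RInt_unique G x v (F v - F x)); [unfold plus; simpl; lra|].
    apply HGg_int; [lra|lra|]; apply HFr; lra. }
  replace (F v - F u + (l - r)) with (plus (J s) (RInt G s v)).
  - apply (@is_RInt_Chasles R_NormedModule) with s; apply HGg_int; try lra;
      apply (RInt_correct (V := R_CompleteNormedModule)), HGi; lra.
  - unfold J; rewrite (RInt_Chasles G u s v) by (apply HGi; lra).
    fold (J v); lra.
Qed.

Lemma is_lim_plus_R (g h : R -> R) (x a b : R) :
  is_lim g x a -> is_lim h x b -> is_lim (fun y => g y + h y) x (a + b).
Proof. intros Hg Hh; now apply (is_lim_plus g h x a b). Qed.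

Lemma is_lim_minus_R (g h : R -> R) (x a b : R) :
  is_lim g x a -> is_lim h x b -> is_lim (fun y => g y - h y) x (a - b).
Proof. intros Hg Hh; now apply (is_lim_minus g h x a b). Qed.

Lemma is_lim_mult_R (g h : R -> R) (x a b : R) :
  is_lim g x a -> is_lim h x b -> is_lim (fun y => g y * h y) x (a * b).
Proof. intros Hg Hh; exact (is_lim_mult g h x a b Hg Hh I). Qed.

Lemma is_lim_div_R (g h : R -> R) (x a b : R) : b <> 0 ->
  is_lim g x a -> is_lim h x b -> is_lim (fun y => g y / h y) x (a / b).
Proof.
  intros Hb Hg Hh; apply (is_lim_div g h x a b Hg Hh); [|exact I].
  intros E; injection E; exact Hb.
Qed.

Lemma atan_pos_inv y : 0 < y -> atan y = PI / 2 - atan (/ y).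
Proof. intros Hy; rewrite atan_inv by exact Hy; ring. Qed.

Lemma atan_neg_inv y : y < 0 -> atan y = - (PI / 2) - atan (/ y).
Proof.
  intros Hy; rewrite <- (Ropp_involutive y) at 1; rewrite atan_opp, atan_pos_inv by lra.
  rewrite Rinv_opp, atan_opp; ring.
Qed.

Lemma filterlim_atan_offset {T} {F} {FF : Filter F} (h : T -> R) (c : R) :
  F (fun x => atan (h x) = c - atan (/ h x)) ->
  filterlim (fun x => / h x) F (locally 0) ->
  filterlim (fun x => atan (h x)) F (locally c).
Proof.
  intros Hc Hinv.
  apply filterlim_ext_loc with (fun x => c - atan (/ h x)).
  - now apply filter_imp with (2 := Hc).
  - apply (filterlim_comp _ _ _ (fun x => / h x) (fun y => c - atan y) F (locally 0)); [exact Hinv|].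
    replace (locally c) with (locally (c - atan 0)) by (rewrite atan_0, Rminus_0_r; reflexivity).
    apply (@continuous_minus _ _ R_NormedModule (fun _ => c) atan);
      [apply continuous_const|apply continuous_atan].
Qed.

Lemma filter_le_at_left_locally' s : filter_le (at_left s) (locally' s).
Proof. intros P [d Hd]; exists d; intros y Hy Hys; apply Hd; [exact Hy|lra]. Qed.

Lemma filter_le_at_right_locally' s : filter_le (at_right s) (locally' s).
Proof. intros P [d Hd]; exists d; intros y Hy Hys; apply Hd; [exact Hy|lra]. Qed.

Lemma atan_at_pole (h : R -> R) (s l : R) : 0 < l ->
  is_lim (fun x => (x - s) * h x) s l ->
  filterlim (fun x => atan (h x)) (at_left s) (locally (- (PI / 2))) /\
  filterlim (fun x => atan (h x)) (at_right s) (locally (PI / 2)).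
Proof.
  intros Hl Hres.
  assert (Hinv : is_lim (fun x => / h x) s 0).
  { assert (H : is_lim (fun x => (x - s) / ((x - s) * h x)) s ((s - s) / l)).
    { apply is_lim_div_R; [lra| |exact Hres].
      apply is_lim_minus_R; [apply is_lim_id|apply is_lim_const]. }
    rewrite Rminus_diag, Rdiv_0_l in H; apply is_lim_ext_loc with (2 := H).
    (* Also where [h x = 0], as [/ 0 = 0]. *)
    exists (mkposreal _ Rlt_0_1); intros x _ Hxs; simpl.
    unfold Rdiv; rewrite Rinv_mult, <- Rmult_assoc, Rinv_r, Rmult_1_l by lra; reflexivity. }
  assert (Hpos : locally' s (fun x => 0 < (x - s) * h x)).
  { apply is_lim_spec in Hres; apply filter_imp with (2 := Hres (mkposreal l Hl)).
    simpl; intros x Hx; apply Rabs_def2 in Hx; lra. }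
  destruct Hpos as [d Hd]; split; apply filterlim_atan_offset.
  - exists d; intros x Hx Hxs; apply atan_neg_inv.
    specialize (Hd x Hx (Rlt_not_eq _ _ Hxs)); nra.
  - exact (filterlim_filter_le_1 _ (filter_le_at_left_locally' s) Hinv).
  - exists d; intros x Hx Hxs; apply atan_pos_inv.
    specialize (Hd x Hx (Rgt_not_eq _ _ Hxs)); nra.
  - exact (filterlim_filter_le_1 _ (filter_le_at_right_locally' s) Hinv).
Qed.

(** * Zeros of finite order *)

Lemma zero_count_formula_single_zero f u s v : smooth f -> u < s < v -> f s = 0 ->
  (forall x, u <= x <= v -> x <> s -> f x <> 0) ->
  (exists L : R, is_lim (zero_count_integrand f) s L) ->
  filterlim (angle f) (at_left s) (locally (- (PI / 2))) ->
  filterlim (angle f) (at_right s) (locally (PI / 2)) ->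
  zero_count_formula f u v.
Proof.
  intros Hs Hs_in Hfs Hnz [L HL] Hleft Hright.
  exists (s :: nil); split; [split|].
  - constructor; [easy|constructor].
  - intros x; simpl; split; [intros [<-|[]]; split; [lra|exact Hfs]|].
    intros [Hx Hfx]; left; destruct (Req_dec s x) as [|Hxs]; [assumption|].
    exfalso; exact (Hnz x Hx (not_eq_sym Hxs) Hfx).
  - replace (PI * INR (length (s :: nil)) + angle f u - angle f v)
      with (- angle f v - - angle f u + (- - (PI / 2) - - (PI / 2))).
    2:{ change (INR (length (s :: nil))) with 1; lra. }
    (* The double negation matches the limits produced by [filterlim_opp] below. *)
    apply (is_RInt_jump _ (fun x => - angle f x) u s v L); try assumption.
    + intros x Hx Hxs; apply continuous_integrand, nonzero_integrand_denominator, Hnz;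
        assumption.
    + intros x Hx; replace (- angle f x - - angle f u) with (angle f u - angle f x) by ring.
      apply is_RInt_integrand_zero_free; [exact Hs|lra|intros y Hy; apply Hnz; lra].
    + intros x Hx; replace (- angle f v - - angle f x) with (angle f x - angle f v) by ring.
      apply is_RInt_integrand_zero_free; [exact Hs|lra|intros y Hy; apply Hnz; lra].
    + exact (filterlim_comp _ _ _ _ _ _ _ _ Hleft (filterlim_opp (- (PI / 2)))).
    + exact (filterlim_comp _ _ _ _ _ _ _ _ Hright (filterlim_opp (PI / 2))).
Qed.

(* With [t = x - s] and [p = t ^ (n - 2)], the right-hand side is the integrand
   written with the rescaled derivatives [f^(k) / t ^ (n - k)]: the common factor
   [(t * p) ^ 2] cancels. *)
Lemma integrand_scaling (t p y0 y1 y2 : R) : t <> 0 -> p <> 0 ->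
  (y1 ^ 2 - y0 * y2) / (y0 ^ 2 + y1 ^ 2) =
  (y1 / (t * p) * (y1 / (t * p)) - y0 / (t * t * p) * (y2 / p))
    / (t * (y0 / (t * t * p)) * (t * (y0 / (t * t * p))) + y1 / (t * p) * (y1 / (t * p))).
Proof.
  intros Ht Hp; destruct (Req_dec (y0 ^ 2 + y1 ^ 2) 0) as [HD|HD].
  - assert (y0 = 0 /\ y1 = 0) as [-> ->] by (split; nra).
    unfold Rdiv; rewrite !Rmult_0_l, pow_i, Rplus_0_l, !Rmult_0_r by lia; ring.
  - field; repeat split; [assumption|assumption|]; now rewrite <- !Rsqr_pow2 in HD.
Qed.

Section ZeroOfFiniteOrder.

Variables (f : R -> R) (s : R) (n : nat).
Hypothesis f_smooth : smooth f.
Hypothesis f_flat : forall k, (k < n)%nat -> Derive_n f k s = 0.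
Hypothesis f_order : Derive_n f n s <> 0.
Hypothesis n_pos : (0 < n)%nat.

Let scaled k x := Derive_n f k x / (x - s) ^ (n - k).
Let scaled_lim k := Derive_n f n s / INR (fact (n - k)).

Lemma scaled_lim_neq0 k : scaled_lim k <> 0.
Proof.
  unfold scaled_lim, Rdiv; apply Rmult_integral_contrapositive; split;
    [exact f_order|apply Rinv_neq_0_compat, INR_fact_neq_0].
Qed.

Lemma is_lim_scaled k : (k <= n)%nat -> is_lim (scaled k) s (scaled_lim k).
Proof.
  intros Hk; unfold scaled, scaled_lim.
  replace (Derive_n f n s) with (Derive_n (Derive_n f k) (n - k) s)
    by (rewrite Derive_n_comp; f_equal; lia).
  apply is_lim_flat_quotient; [now apply smooth_Derive_n|].
  intros j Hj; rewrite Derive_n_comp; apply f_flat; lia.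
Qed.

Lemma zeros_isolated : locally' s (fun x => f x <> 0).
Proof.
  assert (Hq : 0 < Rabs (scaled_lim 0)) by apply Rabs_pos_lt, scaled_lim_neq0.
  pose proof (is_lim_scaled 0 (Nat.le_0_l n)) as H0; apply is_lim_spec in H0.
  apply filter_imp with (2 := H0 (mkposreal _ Hq)); simpl; intros x Hx Hfx.
  unfold scaled in Hx; simpl in Hx.
  rewrite Hfx, Rdiv_0_l, Rminus_0_l, Rabs_Ropp in Hx; lra.
Qed.

Lemma is_lim_log_derivative :
  is_lim (fun x => (x - s) * (Derive_n f 1 x / f x)) s (INR n).
Proof.
  replace (INR n) with (scaled_lim 1 / scaled_lim 0).
  2:{ assert (Hfact : fact (n - 0) = (n * fact (n - 1))%nat)
        by (destruct n as [|m]; [lia|rewrite Nat.sub_0_r; simpl; now rewrite Nat.sub_0_r]).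
      unfold scaled_lim; rewrite Hfact, mult_INR; field.
      repeat split; auto using INR_fact_neq_0; apply not_0_INR; lia. }
  apply is_lim_ext_loc with (fun x => scaled 1 x / scaled 0 x).
  - destruct zeros_isolated as [d Hd]; exists d; intros x Hx Hxs.
    specialize (Hd x Hx Hxs); unfold scaled; simpl; rewrite Nat.sub_0_r.
    replace ((x - s) ^ n) with ((x - s) * (x - s) ^ (n - 1))
      by (rewrite tech_pow_Rmult; f_equal; lia).
    field; split; [exact Hd|]; split; [apply pow_nonzero|]; lra.
  - apply is_lim_div_R; [apply scaled_lim_neq0| |]; apply is_lim_scaled; lia.
Qed.

Lemma is_lim_integrand : exists L : R, is_lim (zero_count_integrand f) s L.
Proof.
  destruct (Nat.eq_dec n 1) as [Hn1|Hn1].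
  - exists (zero_count_integrand f s); apply is_lim_continuity, continuity_pt_filterlim.
    apply continuous_integrand; [exact f_smooth|].
    rewrite Hn1 in f_order; change (f s) with (Derive_n f 0 s); rewrite f_flat by lia.
    assert (0 < Derive_n f 1 s ^ 2) by (apply pow2_gt_0, f_order); lra.
  - set (q k := scaled_lim k).
    exists ((q 1%nat * q 1%nat - q 0%nat * q 2%nat)
            / ((s - s) * q 0%nat * ((s - s) * q 0%nat) + q 1%nat * q 1%nat)).
    apply is_lim_ext_loc with (fun x => (scaled 1 x * scaled 1 x - scaled 0 x * scaled 2 x)
      / ((x - s) * scaled 0 x * ((x - s) * scaled 0 x) + scaled 1 x * scaled 1 x)).
    + exists (mkposreal _ Rlt_0_1); intros x _ Hxs; unfold scaled.
      replace ((x - s) ^ (n - 0)) with ((x - s) * (x - s) * (x - s) ^ (n - 2))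
        by (rewrite Rmult_assoc, !tech_pow_Rmult; f_equal; lia).
      replace ((x - s) ^ (n - 1)) with ((x - s) * (x - s) ^ (n - 2))
        by (rewrite tech_pow_Rmult; f_equal; lia).
      symmetry; apply integrand_scaling; [lra|apply pow_nonzero; lra].
    + assert (Hq : forall k, (k <= 2)%nat -> is_lim (scaled k) s (q k))
        by (intros k Hk; apply is_lim_scaled; lia).
      assert (Ht : is_lim (fun x => x - s) s (s - s))
        by (apply is_lim_minus_R; [apply is_lim_id|apply is_lim_const]).
      assert (q 1%nat <> 0) by apply scaled_lim_neq0.
      apply is_lim_div_R; [rewrite Rminus_diag, !Rmult_0_l, Rplus_0_l; nra| |].
      all: repeat first [exact Ht | apply Hq; lia | apply is_lim_minus_R
                        | apply is_lim_plus_R | apply is_lim_mult_R].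
Qed.

Lemma zero_count_formula_near_zero :
  holds_near (zero_count_formula f) (fun x => f x <> 0) s.
Proof.
  destruct zeros_isolated as [d Hd].
  assert (Hnz : forall x, Rabs (x - s) < d -> x <> s -> f x <> 0) by exact Hd.
  exists d; split; [apply cond_pos|split].
  - intros x Hx; apply Hnz; [lra|]; intros ->; rewrite Rminus_diag, Rabs_R0 in Hx; lra.
  - intros u v Hu Huv Hv Hfu Hfv.
    assert (Hball : forall x, u <= x <= v -> x <> s -> f x <> 0)
      by (intros x Hx Hxs; apply Hnz; [apply Rabs_def1|]; lra).
    assert (Hfs : f s = 0) by (apply (f_flat 0); exact n_pos).
    destruct (Rlt_or_le v s) as [Hvs|Hsv];
      [apply zero_count_formula_zero_free; [exact f_smooth|exact Huv|];
       intros x Hx; apply Hball; lra|].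
    destruct (Rlt_or_le s u) as [Hsu|Hus];
      [apply zero_count_formula_zero_free; [exact f_smooth|exact Huv|];
       intros x Hx; apply Hball; lra|].
    assert (u <> s) by (intros ->; contradiction).
    assert (v <> s) by (intros ->; contradiction).
    destruct (atan_at_pole (fun x => Derive_n f 1 x / f x) s (INR n)) as [Hleft Hright];
      [now apply lt_0_INR|exact is_lim_log_derivative|].
    apply zero_count_formula_single_zero with s; try assumption; [lra|].
    exact is_lim_integrand.
Qed.

End ZeroOfFiniteOrder.

Lemma zero_count_formula_near_nonzero f s : smooth f -> f s <> 0 ->
  holds_near (zero_count_formula f) (fun x => f x <> 0) s.
Proof.
  intros Hs Hfs.
  assert (Hloc : locally s (fun x => f x <> 0)).
  { apply (smooth_continuous f 0 s Hs (fun y => y <> 0)).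
    exists (mkposreal _ (Rabs_pos_lt _ Hfs)); intros y Hy Hy0.
    change (Rabs (y - f s) < Rabs (f s)) in Hy.
    rewrite Hy0, Rminus_0_l, Rabs_Ropp in Hy; lra. }
  destruct Hloc as [d Hd]; exists d; split; [apply cond_pos|split].
  - intros x Hx; apply Hd; change (Rabs (x - s) < d); lra.
  - intros u v Hu Huv Hv _ _; apply zero_count_formula_zero_free; [exact Hs|exact Huv|].
    intros x Hx; apply Hd; change (Rabs (x - s) < d); apply Rabs_def1; lra.
Qed.

Lemma zero_count_formula_local f s : smooth f -> no_flat_zero f ->
  holds_near (zero_count_formula f) (fun x => f x <> 0) s.
Proof.
  intros Hs Hnf; destruct (Req_dec (f s) 0) as [Hfs|Hfs];
    [|now apply zero_count_formula_near_nonzero].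
  destruct (Wf_nat.dec_inh_nat_subset_has_unique_least_element
              (fun r => Derive_n f r s <> 0)) as [n [[Hn Hmin] _]];
    [intros r; apply classic|now apply Hnf|].
  apply (zero_count_formula_near_zero f s n Hs); [|exact Hn|].
  - intros k Hk; apply NNPP; intros Hk'; specialize (Hmin k Hk'); lia.
  - destruct n as [|n]; [contradiction|lia].
Qed.

Theorem corollary3 (f : R -> R) (a b : R) :
  smooth f -> no_flat_zero f -> a < b -> f a * f b <> 0 ->
  ex_RInt (zero_count_integrand f) a b /\
  exists zs : list R,
    NoDup zs /\
    (forall x : R, In x zs <-> (a <= x <= b /\ f x = 0)) /\
    INR (length zs) =
      / PI * (atan (Derive_n f 1 b / f b) - atan (Derive_n f 1 a / f a)
              + RInt (zero_count_integrand f) a b).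
Proof.
  intros Hs Hnf Hab Hfab.
  assert (Hfa : f a <> 0) by (intros E; apply Hfab; rewrite E; ring).
  assert (Hfb : f b <> 0) by (intros E; apply Hfab; rewrite E; ring).
  destruct (local_to_global (zero_count_formula f) (fun x => f x <> 0)
              (zero_count_formula_chasles f) (fun s => zero_count_formula_local f s Hs Hnf)
              a b) as [zs [[Hnodup Hzeros] Hint]]; [lra|exact Hfa|exact Hfb|].
  split; [exists (PI * INR (length zs) + angle f a - angle f b); exact Hint|].
  exists zs; split; [exact Hnodup|split; [exact Hzeros|]].
  rewrite (is_RInt_unique _ _ _ _ Hint); unfold angle; field; apply PI_neq0.
Qed.
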